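(* Let $X$ be a finite simplicial complex, $d\ge0$, and suppose $\ker(B_{d+1})=0$ (there are no nonzero $(d+1)$-cycles). Let $F:C_{d+1}(X)\to C_{d+1}(X)$ be a smooth vector field and $G^{\uparrow}=B_{d+1}FB_{d+1}^\intercal$. Then there is a bijection between the fixed points of the restriction $G^{\uparrow}|_{\operatorname{im}(B_{d+1})}:\operatorname{im}(B_{d+1})\to\operatorname{im}(B_{d+1})$ and those of $F$. If $F$ is moreover componentwise, then this bijection preserves stability, i.e. the numbers of positive, zero and negative eigenvalues of the corresponding linearized systems.
   Context: A finite simplicial complex $X$ on vertex set $\{1,\dots,n\}$ is a collection of nonempty subsets closed under taking nonempty subsets; $X_d$ is the set of simplices with $d+1$ vertices; a $d$-simplex with vertices $i_0<\dots<i_d$ is written $[i_0,\dots,i_d]$. $C_d(X)$ is the real vector space with basis $X_d$ and inner product making $X_d$ orthonormal. The boundary map is $\partial_d[i_0,\dots,i_d]=\sum_{k=0}^d(-1)^k[i_0,\dots,\widehat{i_k},\dots,i_d]$ with matrix $B_d$; $B_d^\intercal$ its transpose. A fixed point of a vector field is a zero of it. $F$ is componentwise if $(F(x))_s$ depends only on $x_s$ for each $s\in X_{d+1}$. *)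

From HB Require Import structures.
From mathcomp Require Import all_boot all_order all_algebra.
From mathcomp Require Import all_classical all_reals all_analysis.
Set Implicit Arguments. Unset Strict Implicit. Unset Printing Implicit Defensive.
Import Order.TTheory GRing.Theory Num.Theory.
Import numFieldNormedType.Exports.
Local Open Scope ring_scope.

(* A finite simplicial complex on the vertex set {0,...,n-1} (the paper's
   {1,...,n}, relabelled preserving the order): a set of nonempty subsets
   closed under taking nonempty subsets. *)
Definition simplicial_complex (n : nat) (X : {set {set 'I_n}}) : Prop :=
  (forall s, s \in X -> s != finset.set0) /\
  (forall s t : {set 'I_n}, s \in X -> t \subset s -> t != finset.set0 -> t \in X).

Definition simplices (n : nat) (X : {set {set 'I_n}}) (k : nat) : {set {set 'I_n}} :=
  [set s in X | #|s| == k.+1].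

(* C_k(X) is identified with row vectors 'rV[R]_#|X_k|; the basis element
   indexed by i : 'I_#|X_k| is the simplex enum_val i. *)

(* Matrix B_{d+1} of the boundary map C_{d+1} -> C_d: rows indexed by
   d-simplices tau, columns by (d+1)-simplices sigma; the entry is (-1)^k when
   tau is sigma with its k-th vertex (in increasing order, counted from 0)
   removed, i.e. k = number of vertices of sigma smaller than the removed one. *)
Definition bmx (R : pzRingType) (n : nat) (X : {set {set 'I_n}}) (d : nat) :
    'M[R]_(#|simplices X d|, #|simplices X d.+1|) :=
  \matrix_(i < #|simplices X d|, j < #|simplices X d.+1|)
    let tau : {set 'I_n} := enum_val i in let sigma : {set 'I_n} := enum_val j in
    if tau \subset sigma then
      \sum_(v in sigma :\: tau) (-1) ^+ #|[set u in sigma | (u < v)%N]|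
    else 0.

Fixpoint iterD (R : realType) (m : nat) (s : seq 'rV[R]_m)
    (F : 'rV[R]_m -> 'rV[R]_m) : 'rV[R]_m -> 'rV[R]_m :=
  match s with
  | [::] => F
  | v :: s' => fun x => 'D_v (iterD s' F) x
  end.

Definition smooth (R : realType) (m : nat) (F : 'rV[R]_m -> 'rV[R]_m) : Prop :=
  forall (s : seq 'rV[R]_m) (x : 'rV[R]_m), differentiable (iterD s F) x.

Definition componentwise (R : realType) (m : nat) (F : 'rV[R]_m -> 'rV[R]_m) : Prop :=
  forall (x x' : 'rV[R]_m) (s : 'I_m), x 0 s = x' 0 s -> F x 0 s = F x' 0 s.

Definition nroots (R : realType) (P : pred R) (p : {poly R}) (k : nat) : Prop :=
  (exists s : seq R, [/\ size s = k, all P s & (\prod_(r <- s) ('X - r%:P)) %| p])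
  /\ (forall s : seq R, all P s -> (\prod_(r <- s) ('X - r%:P)) %| p -> (size s <= k)%N).

Definition same_inertia (R : realType) (a b : nat) (A : 'M[R]_a) (B : 'M[R]_b) : Prop :=
  forall k : nat,
    (nroots (fun r => 0 < r) (char_poly A) k <-> nroots (fun r => 0 < r) (char_poly B) k) /\
    (nroots (fun r => r == 0) (char_poly A) k <-> nroots (fun r => r == 0) (char_poly B) k) /\
    (nroots (fun r => r < 0) (char_poly A) k <-> nroots (fun r => r < 0) (char_poly B) k).

From HB Require Import structures.
From mathcomp Require Import all_boot all_order all_algebra.
From mathcomp Require Import all_classical all_reals all_analysis.
From mathcomp Require Import complex.
Import Order.TTheory GRing.Theory Num.Theory.
Import numFieldNormedType.Exports.

Set Implicit Arguments. Unset Strict Implicit. Unset Printing Implicit Defensive.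
Local Open Scope ring_scope.

(* Since c |-> c B^T is injective, x |-> x B maps the zeros of G lying in
   im(B^T) bijectively onto the zeros of F.  At such a zero the Jacobian of G
   is B J B^T, where J = diag(j) is the Jacobian of F, diagonal because F is
   componentwise; on im(B^T) it acts as K J with K = B^T B positive definite.
   Factoring K = T T^*, the matrix K J is similar to the Hermitian matrix
   T^* J T, which is congruent to J, so Sylvester's law of inertia shows that
   its (real) eigenvalues have the same signs as the entries of j.  The
   spectral theorem being available only over algebraically closed fields,
   this last step is carried out in R[i]. *)

Definition inertia (R : numDomainType) n (d : 'rV[R]_n) : nat * nat * nat :=
  (#|[set i | 0 < d 0 i]|, #|[set i | d 0 i == 0]|, #|[set i | d 0 i < 0]|).

Lemma card_inertia (R : numDomainType) n (d : 'rV[R]_n) : d \is a realmx ->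
  addn (addn #|[set i | 0 < d 0 i]| #|[set i | d 0 i == 0]|) #|[set i | d 0 i < 0]| = n.
Proof.
move=> /mxOverP dreal.
have posIneg : #|[set i | 0 < d 0 i] :&: [set i | d 0 i < 0]| = 0%N.
  by apply: eq_card0 => i; rewrite !inE lt_asym.
have nonzeroE : ~: [set i | d 0 i == 0] = [set i | 0 < d 0 i] :|: [set i | d 0 i < 0].
  by apply/setP => i; rewrite !inE; case: (real_ltgtP (dreal 0 i) (real0 _)).
by rewrite addnAC -cardsUI posIneg addn0 -nonzeroE addnC cardsC card_ord.
Qed.

Lemma char_poly_diag (R : comNzRingType) n (d : 'rV[R]_n) :
  char_poly (diag_mx d) = \prod_i ('X - (d 0 i)%:P).
Proof.
rewrite char_poly_trig ?diag_mx_is_trig //.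
by apply: eq_bigr => i _; rewrite mxE eqxx mulr1n.
Qed.

Lemma char_poly_conj (R : comUnitRingType) n (P A : 'M[R]_n) : P \in unitmx ->
  char_poly (P *m A *m invmx P) = char_poly A.
Proof.
move=> Punit; rewrite /char_poly /char_poly_mx.
set P' := map_mx polyC P; set Pi := map_mx polyC (invmx P).
have PPi : P' *m Pi = 1%:M by rewrite -map_mxM mulmxV // map_mx1.
have -> : 'X%:M - map_mx polyC (P *m A *m invmx P) = P' *m ('X%:M - map_mx polyC A) *m Pi.
  rewrite mulmxBr mulmxBl !map_mxM -/P' -/Pi; congr (_ - _).
  by rewrite scalar_mxC -mulmxA PPi mulmx1.
by rewrite !det_mulmx mulrAC -det_mulmx PPi det1 mul1r.
Qed.

Lemma char_poly_restrict (F : fieldType) r q n (Q : 'M[F]_(r, n)) (P : 'M[F]_(q, n))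
    (A : 'M[F]_n) (M : 'M[F]_r) (N : 'M[F]_q) :
  row_free Q -> row_free P -> (Q == P)%MS ->
  Q *m A = M *m Q -> P *m A = N *m P -> char_poly M = char_poly N.
Proof.
move=> Qfree Pfree QP QA PA.
have rq : r = q by rewrite -(eqP Qfree) -(eqP Pfree); exact: eqmx_rank.
subst q.
have /andP[/submxP[U QE] /submxP[V PE]] := QP.
have VU : V *m U = 1%:M by apply: (row_free_inj Pfree); rewrite mul1mx -mulmxA -QE -PE.
have [_ Uunit] := mulmx1_unit VU.
suff -> : M = U *m N *m invmx U by rewrite char_poly_conj.
apply: (row_free_inj Qfree); rewrite /= -QA QE -mulmxA PA.
by rewrite !mulmxA mulmxKV.
Qed.

Section ComplexInertia.
Variable C : numClosedFieldType.
Local Open Scope sesquilinear_scope.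

Definition supp_mx n (S : {set 'I_n}) : 'M[C]_(#|S|, n) :=
  \matrix_(k, j) (enum_val k == j)%:R.

Lemma supp_mx_free n (S : {set 'I_n}) : row_free (supp_mx S).
Proof.
apply: inj_row_free => v /rowP vS0; apply/rowP => k; have := vS0 (enum_val k).
rewrite !mxE (bigD1 k) //= mxE eqxx mulr1 big1 ?addr0 // => l lk.
by rewrite mxE (inj_eq enum_val_inj) (negbTE lk) mulr0.
Qed.

Lemma supp_mx_eq0 n (S : {set 'I_n}) (u : 'rV[C]_n) j :
  (u <= supp_mx S)%MS -> j \notin S -> u 0 j = 0.
Proof.
move=> /submxP[w ->] jS; rewrite mxE big1 // => k _; rewrite mxE.
by case: eqP => [kj | _]; [rewrite -kj enum_valP in jS | rewrite mulr0].
Qed.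

Lemma diag_formE n (x d : 'rV[C]_n) :
  (x *m diag_mx d *m x^t*) 0 0 = \sum_i d 0 i * (x 0 i * (x 0 i)^*).
Proof.
rewrite mxE; apply: eq_bigr => i _.
by rewrite mul_mx_diag !mxE mulrAC mulrC.
Qed.

Lemma diag_form_le0 n (x d : 'rV[C]_n) :
  (forall i, x 0 i != 0 -> d 0 i <= 0) -> (x *m diag_mx d *m x^t*) 0 0 <= 0.
Proof.
move=> dx; rewrite diag_formE; apply: sumr_le0 => i _.
have [-> | xi0] := eqVneq (x 0 i) 0; first by rewrite mul0r mulr0.
by rewrite mulr_le0_ge0 ?mul_conjC_ge0 ?dx.
Qed.

Lemma diag_form_gt0 n (x d : 'rV[C]_n) : x != 0 ->
  (forall i, x 0 i != 0 -> 0 < d 0 i) -> 0 < (x *m diag_mx d *m x^t*) 0 0.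
Proof.
move=> /rV0Pn[i xi0] dx; rewrite diag_formE (bigD1 i) //=.
rewrite ltr_wpDr //; last by rewrite mulr_gt0 ?mul_conjC_gt0 ?dx.
apply: sumr_ge0 => j _.
have [-> | xj0] := eqVneq (x 0 j) 0; first by rewrite mul0r mulr0.
by rewrite mulr_ge0 ?mul_conjC_ge0 ?ltW ?dx.
Qed.

Lemma sylvester_pos_le n (P : 'M[C]_n) (d e : 'rV[C]_n) : P \in unitmx ->
  d \is a realmx -> P *m diag_mx d *m P^t* = diag_mx e ->
  leq #|[set i | 0 < e 0 i]| #|[set i | 0 < d 0 i]|.
Proof.
move=> Punit /mxOverP dreal PdP.
set Se := [set i | 0 < e 0 i]; set Sd := [set i | 0 < d 0 i].
set U := supp_mx Se *m P; set W := supp_mx (~: Sd).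
(* The form of diag d is positive definite on U and nonpositive on W. *)
have UW0 : (U :&: W)%MS = 0.
  apply/eqP/rowV0P => v; rewrite sub_capmx => /andP[/submxP[a ->]].
  rewrite mulmxA; have wSe : (a *m supp_mx Se <= supp_mx Se)%MS by apply: submxMl.
  move: (a *m supp_mx Se) wSe => w wSe wPW.
  have [-> | w0] := eqVneq w 0; first by rewrite mul0mx.
  have : 0 < (w *m diag_mx e *m w^t*) 0 0.
    apply: diag_form_gt0 => // i; apply: contraTT => iSe.
    by rewrite negbK (supp_mx_eq0 wSe) ?inE.
  have : ((w *m P) *m diag_mx d *m (w *m P)^t*) 0 0 <= 0.
    apply: diag_form_le0 => i; apply: contraTT => idle0.
    by rewrite negbK (supp_mx_eq0 wPW) // !inE -real_leNgt.
  rewrite trmx_mul map_mxM -PdP !mulmxA => le0 /lt_le_trans/(_ le0).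
  by rewrite ltxx.
have := mxrank_sum_cap U W; rewrite UW0 mxrank0 addn0.
rewrite mxrankMfree ?row_free_unit // !(eqP (supp_mx_free _)) => rkUW.
by rewrite -(leq_add2r #|~: Sd|) -rkUW cardsC card_ord rank_leq_col.
Qed.

Lemma sylvester_inertia n (P : 'M[C]_n) (d e : 'rV[C]_n) : P \in unitmx ->
  d \is a realmx -> e \is a realmx -> P *m diag_mx d *m P^t* = diag_mx e ->
  inertia e = inertia d.
Proof.
move=> Punit dreal ereal PdP.
have PVunit : invmx P \in unitmx by rewrite unitmx_inv.
have PVeP : invmx P *m diag_mx e *m (invmx P)^t* = diag_mx d.
  rewrite -PdP -!mulmxA mulKmx // -map_mxM -trmx_mul mulVmx //.
  by rewrite trmx1 map_mx1 mulmx1.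
have PdPN : P *m diag_mx (- d) *m P^t* = diag_mx (- e).
  by rewrite !raddfN /= mulNmx PdP.
have PVePN : invmx P *m diag_mx (- e) *m (invmx P)^t* = diag_mx (- d).
  by rewrite !raddfN /= mulNmx PVeP.
have pos_eq : #|[set i | 0 < e 0 i]| = #|[set i | 0 < d 0 i]|.
  apply/eqP; rewrite eqn_leq.
  by rewrite (sylvester_pos_le Punit dreal PdP) (sylvester_pos_le PVunit ereal PVeP).
have negsetE (f : 'rV[C]_n) : [set i | f 0 i < 0] = [set i | 0 < (- f) 0 i].
  by apply/setP => i; rewrite !inE mxE oppr_gt0.
have neg_eq : #|[set i | e 0 i < 0]| = #|[set i | d 0 i < 0]|.
  have realN (f : 'rV[C]_n) : f \is a realmx -> - f \is a realmx.
    by move=> /mxOverP freal; apply/mxOverP => i j; rewrite mxE rpredN.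
  apply/eqP; rewrite !negsetE eqn_leq (sylvester_pos_le Punit (realN _ dreal) PdPN).
  by rewrite (sylvester_pos_le PVunit (realN _ ereal) PVePN).
have zero_eq : #|[set i | e 0 i == 0]| = #|[set i | d 0 i == 0]|.
  apply/(@addnI #|[set i | 0 < d 0 i]|)/(@addIn #|[set i | d 0 i < 0]|).
  by rewrite -{1}pos_eq -{1}neg_eq !card_inertia.
by rewrite /inertia pos_eq zero_eq neg_eq.
Qed.

Lemma gram_factor q p (A : 'M[C]_(q, p)) : row_free A ->
  exists2 T : 'M[C]_q, T \in unitmx & A *m A^t* = T *m T^t*.
Proof.
move=> Afree; have qp : (q <= p)%N by rewrite -(eqP Afree) rank_leq_col.
have /submxP[T AE] := schmidt_sub A; exists T.
  rewrite -row_free_unit /row_free eqn_leq rank_leq_row.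
  by rewrite -{1}(eqP Afree) AE mxrankM_maxl.
by rewrite AE trmx_mul map_mxM mulmxA mulmxtVK ?schmidt_unitarymx.
Qed.

Lemma gram_diag_char_poly q p (A : 'M[C]_(q, p)) (d : 'rV[C]_q) :
  row_free A -> d \is a realmx ->
  exists2 mu : 'rV[C]_q, mu \is a realmx &
    char_poly (A *m A^t* *m diag_mx d) = \prod_i ('X - (mu 0 i)%:P)
    /\ inertia mu = inertia d.
Proof.
move=> Afree dreal; have [T Tunit ->] := gram_factor Afree.
set H := T^t* *m diag_mx d *m T.
have Hherm : H \is hermsymmx.
  apply/is_hermitianmxP; rewrite expr0 scale1r /H !trmx_mul !map_mxM trmxCK.
  by rewrite tr_diag_mx map_diag_mx (realmxC dreal) mulmxA.
set V := spectralmx H; set mu := spectral_diag H.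
have HE : H = invmx V *m diag_mx mu *m V.
  exact/orthomx_spectralP/hermitian_normalmx.
have Vunitary : V \is unitarymx := spectral_unitarymx H.
have Vunit : V \in unitmx := spectral_unit H.
have mureal : mu \is a realmx := hermitian_spectral_diag_real Hherm.
exists mu => //; split.
  have -> : T *m T^t* *m diag_mx d = T *m H *m invmx T by rewrite /H !mulmxA mulmxK.
  rewrite char_poly_conj // HE -[V in _ *m V](invmxK V) char_poly_conj ?unitmx_inv //.
  exact: char_poly_diag.
apply: (@sylvester_inertia _ (V *m T^t*)) => //.
  by rewrite unitmx_mul Vunit map_unitmx unitmx_tr.
rewrite trmx_mul map_mxM trmxCK.
have -> : V *m T^t* *m diag_mx d *m (T *m V^t*) = V *m H *m V^t* by rewrite /H !mulmxA.
by rewrite HE !mulmxA mulmxV // mul1mx mulmxtVK.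
Qed.

End ComplexInertia.

Section RealGram.
Variable R : rcfType.
Local Notation toC := (real_complex R).
Local Open Scope sesquilinear_scope.

Lemma inertia_real_complex n (a : 'rV[R]_n) : inertia (map_mx toC a) = inertia a.
Proof.
rewrite /inertia; congr (_, _, _); apply: eq_card => i; rewrite !inE mxE.
- by rewrite -(rmorph0 toC) ltcR.
- by rewrite -(rmorph0 toC) (inj_eq (@complexI R)).
- by rewrite -(rmorph0 toC) ltcR.
Qed.

Lemma gram_diag_char_poly_real q p (A : 'M[R]_(q, p)) (j : 'rV[R]_q) : row_free A ->
  exists mu : 'rV[R]_q,
    char_poly (A *m A^T *m diag_mx j) = \prod_i ('X - (mu 0 i)%:P)
    /\ inertia mu = inertia j.
Proof.
move=> Afree.
have toC_real (x : R) : toC x \is Num.real by apply/complex_realP; exists x.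
have ACfree : row_free (map_mx toC A) by rewrite /row_free mxrank_map.
have jCreal : map_mx toC j \is a realmx by apply/mxOverP => a b; rewrite mxE.
have [muC /mxOverP muCreal [cpE inertiaE]] := gram_diag_char_poly ACfree jCreal.
pose mu := map_mx (@complex.Re R) muC.
have muE : map_mx toC mu = muC by apply/matrixP => a b; rewrite !mxE RRe_real.
exists mu; split; last by rewrite -inertia_real_complex muE inertiaE inertia_real_complex.
apply: (@map_poly_inj _ _ toC).
have ATE : map_mx toC A^T = (map_mx toC A)^t*.
  by apply/matrixP => a b; rewrite !mxE conj_Creal.
rewrite map_char_poly !map_mxM map_diag_mx ATE cpE map_prod_XsubC.
by apply: eq_bigr => i _; rewrite -muE mxE.
Qed.

End RealGram.

Section RootCount.
Variables (R : realType) (P : pred R).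

Lemma nroots_uniq p k k' : nroots P p k -> nroots P p k' -> k = k'.
Proof.
move=> [[s [<- Ps sp]] maxk] [[s' [<- Ps' s'p]] maxk'].
by apply/eqP; rewrite eqn_leq (maxk' s) // (maxk s').
Qed.

Lemma size_dvdp_prod_XsubC (s t : seq R) : all P s ->
  \prod_(r <- s) ('X - r%:P) %| \prod_(r <- t) ('X - r%:P) -> (size s <= count P t)%N.
Proof.
elim: s t => [//|r s IH] t /= /andP[Pr Ps]; rewrite big_cons => st.
have rt : r \in t.
  rewrite -root_prod_XsubC; apply: root_dvdp st _.
  by rewrite rootM root_XsubC eqxx.
have tE := perm_to_rem rt.
rewrite (perm_big _ tE) big_cons dvdp_mul2l ?polyXsubC_eq0 // in st.
by rewrite (permP tE) /= Pr add1n ltnS IH.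
Qed.

Lemma nroots_prod_XsubC n (a : 'I_n -> R) k :
  nroots P (\prod_i ('X - (a i)%:P)) k <-> k = #|[set i | P (a i)]|.
Proof.
have -> : \prod_i ('X - (a i)%:P) = \prod_(r <- map a (enum 'I_n)) ('X - r%:P).
  by rewrite big_map big_enum.
have -> : #|[set i | P (a i)]| = count P (map a (enum 'I_n)).
  by rewrite count_map cardsE cardE enumT /enum_mem size_filter; apply: eq_count.
set t := map a (enum 'I_n).
have tcount : nroots P (\prod_(r <- t) ('X - r%:P)) (count P t).
  split; last by move=> s Ps st; apply: (size_dvdp_prod_XsubC Ps st).
  exists [seq r <- t | P r]; split; [exact: size_filter | exact: filter_all |].
  by rewrite [X in _ %| X](bigID P) /= big_filter dvdp_mulr.
by split => [/nroots_uniq/(_ tcount) | ->].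
Qed.

End RootCount.

Lemma same_inertia_prod (R : realType) a b k l (A : 'M[R]_a) (B : 'M[R]_b)
    (u : 'rV[R]_k) (v : 'rV[R]_l) :
  char_poly A = \prod_i ('X - (u 0 i)%:P) -> char_poly B = \prod_i ('X - (v 0 i)%:P) ->
  inertia u = inertia v -> same_inertia A B.
Proof.
move=> cA cB [pos_eq zero_eq neg_eq] c; rewrite cA cB !nroots_prod_XsubC /=.
by rewrite pos_eq zero_eq neg_eq.
Qed.

Section Jacobian.
Variable R : realType.

Lemma differentiable_mulmxr m n (A : 'M[R]_(m, n)) (x : 'rV[R]_m) :
  differentiable (mulmxr A) x.
Proof.
have -> : mulmxr A = \sum_(i < m) (fun y : 'rV[R]_m => y 0 i *: row i A).
  by apply/funext => y; rewrite fct_sumE /= mulmx_sum_row.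
by apply: differentiable_sum => i; apply: differentiableZl; apply: differentiable_coord.
Qed.

Lemma diff_mulmxr m n (A : 'M[R]_(m, n)) (x : 'rV[R]_m) :
  'd (mulmxr A) x = mulmxr A :> (_ -> _).
Proof. by apply: diff_lin => y; apply/differentiable_continuous/differentiable_mulmxr. Qed.

Lemma jacobian_mulmxr m n (A : 'M[R]_(m, n)) (x : 'rV[R]_m) : 'J (mulmxr A) x = A.
Proof. by apply/row_matrixP => i; rewrite /jacobian diff_mulmxr !rowE mul_rV_lin1. Qed.

Lemma jacobian_comp m n p (f : 'rV[R]_m -> 'rV[R]_n) (g : 'rV[R]_n -> 'rV[R]_p) x :
  differentiable f x -> differentiable g (f x) ->
  'J (g \o f) x = 'J f x *m 'J g (f x).
Proof.
move=> df dg; apply/row_matrixP => i.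
by rewrite /jacobian !rowE mulmxA !mul_rV_lin1 diff_comp.
Qed.

Lemma jacobian_mulmx_comp p q r s (A : 'M[R]_(p, q)) (B : 'M[R]_(r, s))
    (F : 'rV[R]_q -> 'rV[R]_r) (x : 'rV[R]_p) :
  differentiable F (x *m A) ->
  'J (fun y => F (y *m A) *m B) x = A *m 'J F (x *m A) *m B.
Proof.
move=> dF; have dFA : differentiable (F \o mulmxr A) x.
  by apply: differentiable_comp => //; apply: differentiable_mulmxr.
have -> : (fun y => F (y *m A) *m B) = mulmxr B \o (F \o mulmxr A) by [].
rewrite (jacobian_comp dFA (differentiable_mulmxr B _)).
by rewrite (jacobian_comp (differentiable_mulmxr A x) dF) !jacobian_mulmxr.
Qed.

Lemma jacobian_componentwise m (F : 'rV[R]_m -> 'rV[R]_m) (p : 'rV[R]_m) :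
  componentwise F -> differentiable F p -> 'J F p = diag_mx (\row_i 'J F p i i).
Proof.
move=> Fcw dF; apply/matrixP => i j; rewrite !mxE.
have [<- | ij] := eqVneq i j; first by rewrite mulr1n.
rewrite mulr0n; set g := mulmxr (delta_mx j 0 : 'cV[R]_m) \o F.
have dg : differentiable g p.
  by apply: differentiable_comp => //; apply: differentiable_mulmxr.
have gE (h : R) : g (h *: delta_mx 0 i + p) = g p.
  rewrite /g /= -!colE; apply/matrixP => a b; rewrite !mxE [a]ord1; apply: Fcw.
  by rewrite !mxE [j == i]eq_sym (negbTE ij) andbF mulr0 add0r.
have : 'D_(delta_mx 0 i) g p = 0.
  rewrite /derive (_ : (fun h => _) = cst 0) ?lim_cst //.
  by apply/funext => h /=; rewrite gE subrr scaler0.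
rewrite (deriveEjacobian _ dg) (jacobian_comp dF (differentiable_mulmxr _ _)).
by rewrite jacobian_mulmxr mulmxA -rowE -colE => /matrixP/(_ 0 0); rewrite !mxE.
Qed.

End Jacobian.

Lemma row_mul_tr_eq0 (R : realFieldType) n (w : 'rV[R]_n) : w *m w^T = 0 -> w = 0.
Proof.
move=> /matrixP/(_ 0 0); rewrite !mxE => sq0.
have sq_ge0 (i : 'I_n) : true -> 0 <= w 0 i * w^T i 0 by rewrite mxE -expr2 sqr_ge0.
apply/rowP => i; have /eqP : w 0 i * w^T i 0 = 0 by apply: (psumr_eq0P sq_ge0 sq0).
by rewrite mxE [RHS]mxE mulf_eq0 orbb => /eqP.
Qed.

Lemma sub_trmx_mulmx_eq0 (R : realFieldType) p q (B : 'M[R]_(p, q)) (w : 'rV[R]_p) :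
  (w <= B^T)%MS -> w *m B = 0 -> w = 0.
Proof.
move=> /submxP[c ->] cBB; apply: row_mul_tr_eq0.
by rewrite trmx_mul trmxK mulmxA cBB mul0mx.
Qed.

Lemma gram_unitmx (R : realFieldType) p q (B : 'M[R]_(p, q)) :
  row_free B^T -> B^T *m B \in unitmx.
Proof.
move=> BTfree; rewrite -row_free_unit; apply: inj_row_free => v vBTB.
apply/eqP; rewrite -(mulmx_free_eq0 _ BTfree); apply/eqP/sub_trmx_mulmx_eq0.
  exact: submxMl.
by rewrite -mulmxA.
Qed.

Theorem mainTheorem11 (R : realType) (n : nat) (X : {set {set 'I_n}}) (d : nat)
    (F : 'rV[R]_(#|simplices X d.+1|) -> 'rV[R]_(#|simplices X d.+1|)) :
  simplicial_complex X ->
  (forall c : 'rV[R]_(#|simplices X d.+1|), c *m (bmx R X d)^T = 0 -> c = 0) ->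
  smooth F ->
  let B := bmx R X d in
  let G := fun x : 'rV[R]_(#|simplices X d|) => F (x *m B) *m B^T in
  exists phi : 'rV[R]_(#|simplices X d|) -> 'rV[R]_(#|simplices X d.+1|),
    [/\ (forall x, (x <= B^T)%MS -> G x = 0 -> F (phi x) = 0),
        (forall x x', (x <= B^T)%MS -> G x = 0 -> (x' <= B^T)%MS -> G x' = 0 ->
            phi x = phi x' -> x = x'),
        (forall y, F y = 0 -> exists x, [/\ (x <= B^T)%MS, G x = 0 & phi x = y])
      & (componentwise F ->
         forall x, (x <= B^T)%MS -> G x = 0 ->
         forall (r : nat) (Q : 'M[R]_(r, #|simplices X d|)) (M : 'M[R]_r),
           row_free Q -> (Q == B^T)%MS -> Q *m 'J G x = M *m Q ->
           same_inertia M ('J F (phi x)))].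
Proof.
move=> _ Binj Fsmooth B G.
have BTfree : row_free B^T by apply: inj_row_free.
exists (fun x => x *m B); split.
- by move=> x _ /Binj.
- move=> x x' /submxP[c ->] _ /submxP[c' ->] _ cc'B.
  apply/eqP; rewrite -subr_eq0 -mulmxBl; apply/eqP/sub_trmx_mulmx_eq0.
    exact: submxMl.
  by rewrite !mulmxBl cc'B subrr.
- move=> y Fy; exists (y *m invmx (B^T *m B) *m B^T).
  have yE : y *m invmx (B^T *m B) *m B^T *m B = y.
    by rewrite -mulmxA mulmxKV // gram_unitmx.
  by split; [exact: submxMl | rewrite /G yE Fy mul0mx | ].
move=> Fcw x _ _ r Q M Qfree QB QJ.
have dF : differentiable F (x *m B) := Fsmooth [::] (x *m B).
set j := \row_i 'J F (x *m B) i i.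
have JE : 'J F (x *m B) = diag_mx j := jacobian_componentwise Fcw dF.
rewrite /G jacobian_mulmx_comp // JE in QJ; rewrite JE.
have [mu [cpE inertiaE]] := gram_diag_char_poly_real j BTfree.
have cM : char_poly M = \prod_i ('X - (mu 0 i)%:P).
  rewrite -cpE trmxK; apply: (char_poly_restrict Qfree BTfree QB QJ).
  by rewrite !mulmxA.
exact: same_inertia_prod cM (char_poly_diag j) inertiaE.
Qed.
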